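(* If a spanned map $(M,S)$ is a covered map, then the dual spanned map $(M^*,\bar S)$ is also a covered map, and $$g(M)=g(M_{|S})+g(M^*_{|\bar S}).$$
   Context: Permutations compose right to left. A map is $M=(H,\sigma,\alpha)$ with $H$ finite, $\alpha$ a fixed-point-free involution, $\sigma$ a permutation, $\langle\sigma,\alpha\rangle$ transitive, and a root $r\in H$. Vertices, edges, faces are the cycles of $\sigma,\alpha,\phi=\sigma\alpha$; the genus $g$ satisfies $v-e+f=2-2g$. For a permutation $\pi$ and $S\subseteq H$, $\pi_{|S}$ is obtained from the cycles of $\pi$ by erasing elements not in $S$. A spanned map is $(M,S)$ with $S$ stable by $\alpha$, and $M_{|S}=(S,\sigma_{|S},\alpha_{|S})$. The dual of $M$ is $M^*=(H,\phi,\alpha)$ with the same root, and the dual of $(M,S)$ is $(M^*,\bar S)$ with $\bar S=H\setminus S$, so $M^*_{|\bar S}=(\bar S,\phi_{|\bar S},\alpha_{|\bar S})$. A covered map is a spanned map such that $M_{|S}$ is a connecting unicellular map: $\sigma_{|S},\alpha_{|S}$ transitive on $S$, $S$ meets every cycle of $\sigma$ (except $S=\emptyset$ is allowed when $\sigma$ has one cycle; the empty map counts as a unicellular map of genus $0$), and $\sigma_{|S}\alpha_{|S}$ is cyclic. *)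

From mathcomp Require Import all_boot all_order all_fingroup all_algebra.
Set Implicit Arguments. Unset Strict Implicit. Unset Printing Implicit Defensive.
Import GRing.Theory.

Section Maps.
Variable H : finType.

(* pi_{|S}: for x in S, the first iterate pi^k(x), k >= 1, lying in S;
   identity outside S (only its values on S matter). *)
Definition restr (pi : H -> H) (S : {set H}) (x : H) : H :=
  if x \in S then
    iter (find (fun k => iter k.+1 pi x \in S) (iota 0 #|H|)).+1 pi x
  else x.

Definition ncycles (f : H -> H) (D : {set H}) : nat :=
  #|[set [set y | fconnect f x y] | x in D]|.

Definition transitive_on (s a : H -> H) (D : {set H}) : Prop :=
  forall x y, x \in D -> y \in D ->
    connect [rel u v | (v == s u) || (v == a u)] x y.

(* genus of the (possibly empty) map (D, s, a), from v - e + f = 2 - 2g;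
   the empty map has genus 0 by convention *)
Definition genus_on (D : {set H}) (s a : H -> H) : int :=
  if D == set0 then 0%R else
  ((2%:Z - (ncycles s D)%:Z + (ncycles a D)%:Z
     - (ncycles (s \o a) D)%:Z) %/ 2)%Z.

(* M = (H, sigma, alpha) is a map (the root plays no role here) *)
Definition is_map (sigma alpha : {perm H}) : Prop :=
  [/\ forall x, alpha (alpha x) = x, forall x, alpha x != x
    & transitive_on sigma alpha setT].

Definition genus (sigma alpha : {perm H}) : int :=
  genus_on setT sigma alpha.

(* phi = sigma alpha (right to left): phi x = sigma (alpha x) *)
Definition face_perm (sigma alpha : {perm H}) : {perm H} := (alpha * sigma)%g.

Definition alpha_stable (alpha : {perm H}) (S : {set H}) : Prop :=
  forall x, (alpha x \in S) = (x \in S).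

Definition genus_restr (sigma alpha : {perm H}) (S : {set H}) : int :=
  genus_on S (restr sigma S) (restr alpha S).

Definition covered (sigma alpha : {perm H}) (S : {set H}) : Prop :=
  (S = set0 /\ ncycles sigma setT = 1%N) \/
  [/\ S != set0,
      transitive_on (restr sigma S) (restr alpha S) S,
      (forall x, exists2 y, y \in S & fconnect sigma x y)
    & ncycles (restr sigma S \o restr alpha S) S = 1%N].

End Maps.

From mathcomp Require Import all_boot all_order all_fingroup all_algebra zify.
Set Implicit Arguments. Unset Strict Implicit. Unset Printing Implicit Defensive.

(* Write alpha_S for the permutation acting as alpha on S and fixing the rest,
   and glue = sigma alpha_S.  As alpha is an involution, glue also equals
   phi alpha_{~S}: it is the same permutation for (M, S) and for its dual.
   Off S, glue agrees with sigma, and its first-return map on S is the face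
   permutation of M_{|S}; hence (M, S) is covered exactly when glue is a
   single cycle, a self-dual condition.  Then M_{|S} has v(M) vertices (S
   meets every vertex), e_S edges and one face, and the dual restriction has
   f(M) vertices, e_{~S} edges and one face, so the genus identity reduces to
   e = e_S + e_{~S}; the parity of the cyclic permutation alpha_S sigma makes
   both halvings exact. *)

Section Cycles.
Variable H : finType.
Implicit Types (f g : H -> H) (p : {perm H}) (S D : {set H}).

Lemma fconnect_iterP f x y : fconnect f x y -> exists n, y = iter n f x.
Proof. by move=> /iter_findex <-; eexists. Qed.

Lemma restr_first_return f S x k0 : x \in S -> k0 < #|H| -> iter k0.+1 f x \in S ->
  exists k, [/\ k < #|H|, restr f S x = iter k.+1 f x, iter k.+1 f x \in S
             & forall j, j < k -> iter j.+1 f x \notin S].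
Proof.
move=> xS lt_k0 Sk0; pose P k := iter k.+1 f x \in S.
have hasP : has P (iota 0 #|H|) by apply/hasP; exists k0; rewrite ?mem_iota.
have lt_find : find P (iota 0 #|H|) < #|H| by move: hasP; rewrite has_find size_iota.
exists (find P (iota 0 #|H|)); split => //.
- by rewrite /restr xS.
- by have := nth_find 0 hasP; rewrite nth_iota.
- move=> j lt_j; have := before_find 0 lt_j.
  by rewrite nth_iota ?(ltn_trans lt_j) // /P => ->.
Qed.

Lemma restr_first_returnE f S x k : x \in S -> k < #|H| -> iter k.+1 f x \in S ->
  (forall j, j < k -> iter j.+1 f x \notin S) -> restr f S x = iter k.+1 f x.
Proof.
move=> xS lt_k Sk before_k.
have [k' [_ -> Sk' before_k']] := restr_first_return xS lt_k Sk.
case: (ltngtP k k') => [lt_kk'|lt_k'k|-> //].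
- by move: (before_k' _ lt_kk'); rewrite Sk.
- by move: (before_k _ lt_k'k); rewrite Sk'.
Qed.

Lemma restrP p S x : x \in S ->
  exists k, [/\ k < #|H|, restr p S x = iter k.+1 p x, iter k.+1 p x \in S
             & forall j, j < k -> iter j.+1 p x \notin S].
Proof.
move=> xS; have order_gt0 := fingraph.order_gt0 p x.
apply: (@restr_first_return _ _ _ (fingraph.order p x).-1) => //.
  by rewrite prednK //; apply: max_card.
by rewrite prednK // iter_order //; apply: perm_inj.
Qed.

Lemma restr_in p S x : x \in S -> restr p S x \in S.
Proof. by move=> /(restrP p) [k [_ -> ? _]]. Qed.

Lemma restr_out f S x : x \notin S -> restr f S x = x.
Proof. by rewrite /restr => /negbTE ->. Qed.

Lemma restr_id f S x : x \in S -> f x \in S -> restr f S x = f x.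
Proof.
by move=> xS fxS; apply: (@restr_first_returnE f S x 0) => //; apply/card_gt0P; exists x.
Qed.

Lemma restr_comp p (t : H -> H) S x y : x \in S -> y \in S -> t x = p y ->
  (forall z, z \notin S -> t z = p z) -> restr t S x = restr p S y.
Proof.
move=> xS yS txE tE; have [k [lt_k -> Sk before_k]] := restrP p yS.
have iterE j : j <= k -> iter j.+1 t x = iter j.+1 p y.
  elim: j => [|j IHj] lt_j; first by rewrite /= txE.
  by rewrite iterS IHj ?(ltnW lt_j) // tE ?before_k.
rewrite -iterE //; apply: restr_first_returnE; rewrite ?iterE //.
by move=> j lt_j; rewrite iterE ?(ltnW lt_j) ?before_k.
Qed.

Lemma restr_orbit p S x : x \in S ->
  [set y | fconnect (restr p S) x y] = [set y | fconnect p x y] :&: S.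
Proof.
move=> xS; apply/setP => y; rewrite !inE; apply/idP/andP.
  move=> /fconnect_iterP [n ->]; elim: n => [|n [IHx IHS]]; first by rewrite connect0.
  have [k [_ rE Sk _]] := restrP p IHS.
  by rewrite iterS rE Sk (connect_trans IHx) ?fconnect_iter.
case=> /fconnect_iterP [n ->]; elim/ltn_ind: n x xS => [[_ x _ _|m IHm x xS Sm]].
  exact: connect0.
have [k [_ rxE Sk before_k]] := restrP p xS.
have le_km : k <= m by rewrite leqNgt; apply: contraL Sm => /before_k.
have iterE : iter m.+1 p x = iter (m - k) p (restr p S x).
  by rewrite rxE -iterD addnS subnK.
rewrite iterE (connect_trans (fconnect1 _ _)) // IHm ?ltnS ?leq_subr ?restr_in //.
by rewrite -iterE.
Qed.

Lemma ncycles_set0 f : ncycles f set0 = 0.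
Proof. by rewrite /ncycles imset0 cards0. Qed.

Lemma fconnect_orbit p x y : fconnect p x y ->
  [set z | fconnect p x z] = [set z | fconnect p y z].
Proof.
move=> xy; apply/setP => z; rewrite !inE.
apply/idP/idP => [|/(connect_trans xy)] //.
by apply: connect_trans; rewrite fconnect_sym //; apply: perm_inj.
Qed.

Lemma ncycles_restr p S : ncycles (restr p S) S = ncycles p S.
Proof.
rewrite /ncycles.
have -> : [set [set y | fconnect (restr p S) x y] | x in S] =
          (fun B => B :&: S) @: [set [set y | fconnect p x y] | x in S].
  by rewrite -imset_comp; apply: eq_in_imset => x xS; rewrite /= restr_orbit.
apply: card_in_imset => _ _ /imsetP [x1 x1S ->] /imsetP [x2 x2S ->] /= E.
apply: fconnect_orbit; rewrite fconnect_sym; last exact: perm_inj.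
have : x1 \in [set y | fconnect p x1 y] :&: S by rewrite !inE connect0.
by rewrite E !inE => /andP [].
Qed.

Lemma ncycles_eq f g D : f =1 g -> ncycles f D = ncycles g D.
Proof.
move=> fg; rewrite /ncycles (@eq_imset _ _ _ (fun x => [set y | fconnect g x y])) //.
move=> x.
by apply/setP => y; rewrite !inE (eq_fconnect fg).
Qed.

Lemma ncycles_in f g D : {in D, f =1 g} -> {in D, forall z, f z \in D} ->
  ncycles f D = ncycles g D.
Proof.
move=> fg fD; rewrite /ncycles.
rewrite (@eq_in_imset _ _ _ (fun x => [set y | fconnect g x y])) // => x xD.
have iterE n : iter n f x = iter n g x /\ iter n f x \in D.
  elim: n => [|n [IHE IHD]] //=.
  by split; [rewrite -IHE fg | apply: fD].
apply/setP => y; rewrite !inE.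
apply/idP/idP => /fconnect_iterP [n ->]; rewrite ?(proj1 (iterE n)) ?fconnect_iter //.
by rewrite -(proj1 (iterE n)) fconnect_iter.
Qed.

Lemma ncycles_fix f D : {in D, f =1 id} -> ncycles f D = #|D|.
Proof.
move=> fD; rewrite /ncycles -[RHS](card_in_imset (f := set1)); last first.
  by move=> x y _ _; apply: set1_inj.
rewrite (@eq_in_imset _ _ _ set1) // => x xD; apply/setP => y; rewrite !inE.
apply/idP/idP => [/fconnect_iterP [n ->]|/eqP ->]; last exact: connect0.
by elim: n => //= n /eqP ->; rewrite fD.
Qed.

Lemma ncycles1_fconnect f D x y : ncycles f D = 1 -> x \in D -> y \in D ->
  fconnect f x y.
Proof.
move=> /eqP /cards1P [B cycles1] xD yD.
have orbit_in z : z \in D -> [set w | fconnect f z w] = B.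
  by move=> zD; apply/set1P; rewrite -cycles1 imset_f.
have : y \in [set w | fconnect f y w] by rewrite inE connect0.
by rewrite orbit_in // -(orbit_in x) // inE.
Qed.

Lemma ncycles1_subset f D D' : ncycles f D = 1 -> D' \subset D -> D' != set0 ->
  ncycles f D' = 1.
Proof.
move=> cycles1 sDD' D'n0; apply/eqP; rewrite eqn_leq -{1}cycles1.
by rewrite subset_leq_card ?imsetS // card_gt0 imset_eq0.
Qed.

Lemma ncycles_setT p S : (forall x, exists2 y, y \in S & fconnect p x y) ->
  ncycles p S = ncycles p setT.
Proof.
move=> meetS; rewrite /ncycles; congr #|pred_of_set _|; apply/setP => B.
apply/imsetP/imsetP => [[x _ ->]|[x _ ->]]; first by exists x.
by have [y yS xy] := meetS x; exists y; rewrite ?(fconnect_orbit xy).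
Qed.

Lemma fconnect_meet f g S x y : (forall z, z \notin S -> f z = g z) ->
  fconnect f x y -> y \in S -> exists2 y', y' \in S & fconnect g x y'.
Proof.
move=> fg /fconnect_iterP [n ->]; elim: n x => [|n IHn] x; first by exists x.
rewrite iterSr => /IHn [y' y'S xy']; have [xS|xNS] := boolP (x \in S).
  by exists x; rewrite ?connect0.
by exists y'; rewrite // (connect_trans (fconnect1 g x)) -?fg.
Qed.

Lemma porbit_fconnect p x : porbit p x = [set y | fconnect p x y].
Proof.
apply/setP => y; rewrite inE.
apply/porbitP/idP => [[i ->]|/fconnect_iterP [n ->]]; last by exists n; rewrite permX.
by rewrite permX fconnect_iter.
Qed.

Lemma ncycles_porbits p : ncycles p setT = #|porbits p|.
Proof.
rewrite /ncycles /porbits; congr #|pred_of_set _|; apply/setP => B.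
by apply/imsetP/imsetP => -[x _ ->]; exists x; rewrite ?porbit_fconnect.
Qed.

Lemma odd_ncyclesM p q : odd (ncycles (p * q)%g setT) =
  odd #|H| (+) odd (ncycles p setT) (+) odd (ncycles q setT).
Proof.
rewrite !ncycles_porbits; have := odd_permM p q; rewrite /odd_perm.
by case: (odd #|H|); case: (odd #|porbits p|); case: (odd #|porbits q|);
   case: (odd #|porbits (p * q)%g|).
Qed.

Lemma ncycles_fcard p D : fclosed p D -> ncycles p D = fcard p D.
Proof.
move=> closedD.
have symp : connect_sym (frel p) by move=> x y; apply/fconnect_sym/perm_inj.
pose R := [set x | froots p x && (x \in D)].
have -> : fcard p D = #|R| by apply: eq_card => x; rewrite !inE.
rewrite /ncycles -[RHS](@card_in_imset _ _ (fun x => [set y | fconnect p x y])).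
  congr #|pred_of_set _|; apply/setP => B.
  apply/imsetP/imsetP => [[x xD ->]|[x]]; last first.
    by rewrite inE => /andP [_ xD] ->; exists x.
  exists (froot p x); last exact/fconnect_orbit/connect_root.
  by rewrite inE roots_root //= -(closed_connect closedD (connect_root _ x)).
move=> x1 x2; rewrite !inE => /andP [r1 _] /andP [r2 _] E.
have : x2 \in [set y | fconnect p x1 y] by rewrite E inE connect0.
by rewrite inE -(root_connect symp) (eqP r1) (eqP r2) => /eqP.
Qed.

Lemma ncycles_split p S : (forall x, (p x \in S) = (x \in S)) ->
  ncycles p setT = ncycles p S + ncycles p (~: S).
Proof.
move=> pS; have closed_of D : (forall x, (p x \in D) = (x \in D)) -> fclosed p D.
  by move=> pD x y /= /eqP <-; rewrite pD.
rewrite !ncycles_fcard; try by apply: closed_of => x; rewrite ?inE ?pS.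
rewrite (@eq_n_comp_r _ _ [set: H] H) ?(n_compC S); last by move=> x; rewrite inE.
by congr (_ + _); apply: eq_n_comp_r => x; rewrite !inE.
Qed.

Lemma ncycles_invol p S : (forall x, p (p x) = x) -> (forall x, p x != x) ->
  (forall x, (p x \in S) = (x \in S)) -> #|S| = ncycles p S * 2.
Proof.
move=> pK p_fpf pS; rewrite ncycles_fcard; last by move=> x y /= /eqP <-; rewrite pS.
symmetry; apply: fcard_order_set; first exact: perm_inj.
  apply/subsetP => x _; rewrite inE /fingraph.order.
  have orbitE y : fconnect p x y = (y \in [set p x; x]).
    apply/idP/idP => [/fconnect_iterP [n ->]|]; last first.
      by rewrite !inE => /orP [] /eqP ->; rewrite ?connect0 ?fconnect1.
    elim: n => [|n]; rewrite ?iterS !inE ?eqxx ?orbT //.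
    by case/orP => /eqP ->; rewrite ?pK eqxx ?orbT.
  by rewrite (eq_card orbitE) cards2 eq_sym p_fpf.
by move=> x y /= /eqP <-; rewrite pS.
Qed.

End Cycles.

Local Open Scope ring_scope.

Section Glue.
Variables (H : finType) (sigma alpha : {perm H}) (S : {set H}).

Definition glue : {perm H} := (restr_perm S alpha * sigma)%g.

Hypothesis alphaS : alpha_stable alpha S.

Lemma restr_perm_stableE x : restr_perm S alpha x = if x \in S then alpha x else x.
Proof.
case: ifPn => [xS|xNS]; last exact: out_perm (restr_perm_on _ _) xNS.
by apply: restr_permE xS; apply/astabsP.
Qed.

Lemma glueE x : glue x = sigma (if x \in S then alpha x else x).
Proof. by rewrite permM restr_perm_stableE. Qed.

Lemma glue_out x : x \notin S -> glue x = sigma x.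
Proof. by rewrite glueE => /negbTE ->. Qed.

Lemma restr_face_glue : {in S, restr sigma S \o restr alpha S =1 restr glue S}.
Proof.
move=> x xS /=; rewrite [restr alpha S x]restr_id ?alphaS //.
rewrite (@restr_comp _ sigma glue S x (alpha x)) ?alphaS ?glueE ?xS //.
exact: glue_out.
Qed.

Lemma ncycles_restr_face :
  ncycles (restr sigma S \o restr alpha S) S = ncycles glue S.
Proof.
rewrite (ncycles_in restr_face_glue) ?ncycles_restr //.
by move=> x xS /=; rewrite !restr_in.
Qed.

Lemma glue_set0 : S = set0 -> glue =1 sigma.
Proof. by move=> S0 x; rewrite glueE S0 inE. Qed.

Lemma coveredE : covered sigma alpha S <-> ncycles glue setT = 1.
Proof.
split=> [[[S0 sigma1] | [_ _ meetS face1]] | glue1].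
- by rewrite (ncycles_eq _ (glue_set0 S0)).
- have meet_glue x : exists2 y, y \in S & fconnect glue x y.
    by have [y yS xy] := meetS x; apply: fconnect_meet xy yS => z /glue_out.
  by rewrite -(ncycles_setT meet_glue) -ncycles_restr_face.
have [S0|Sn0] := eqVneq S set0.
  by left; rewrite -(ncycles_eq _ (glue_set0 S0)).
have restr_glue1 : ncycles (restr glue S) S = 1.
  by rewrite ncycles_restr (ncycles1_subset glue1) ?subsetT.
right; split=> //.
- move=> x y xS yS; apply: connect_sub (ncycles1_fconnect restr_glue1 xS yS).
  move=> u _ /eqP <-; have [uS|uNS] := boolP (u \in S); last first.
    by rewrite restr_out ?connect0.
  rewrite -restr_face_glue //; apply: (@connect_trans _ _ (restr alpha S u)).
    by apply: connect1; rewrite /= eqxx orbT.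
  by apply: connect1; rewrite /= eqxx.
- move=> x; have [z zS] := set0Pn _ Sn0.
  have xz := ncycles1_fconnect glue1 (in_setT x) (in_setT z).
  by apply: fconnect_meet xz zS => y /glue_out.
- by rewrite ncycles_restr_face (ncycles1_subset glue1) ?subsetT.
Qed.

Hypotheses (alphaK : forall x, alpha (alpha x) = x) (alpha_fpf : forall x, alpha x != x).

Lemma odd_ncycles_glue :
  odd (ncycles glue setT) = odd (ncycles sigma setT) (+) odd (ncycles alpha S).
Proof.
have restr_alphaS x : (restr_perm S alpha x \in S) = (x \in S).
  by rewrite restr_perm_stableE; case: ifPn => [xS|/negbTE //]; rewrite alphaS xS.
rewrite odd_ncyclesM (ncycles_split restr_alphaS).
rewrite (@ncycles_in _ _ alpha S); first last.
- by move=> x xS; rewrite restr_alphaS.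
- by move=> x xS; rewrite restr_perm_stableE xS.
rewrite (@ncycles_fix _ _ (~: S)); last first.
  by move=> x; rewrite inE restr_perm_stableE => /negbTE ->.
rewrite -(cardsC S) (ncycles_invol alphaK alpha_fpf alphaS) !oddD oddM andbF /=.
by case: (odd #|~: S|); case: (odd (ncycles alpha S)); case: (odd (ncycles sigma setT)).
Qed.

Lemma genus_restr_covered : covered sigma alpha S ->
  genus_restr sigma alpha S =
    ((1 - (ncycles sigma setT)%:Z + (ncycles alpha S)%:Z) %/ 2)%Z.
Proof.
rewrite /genus_restr /genus_on => -[[S0 sigma1]|[Sn0 _ meetS face1]].
  by rewrite S0 eqxx sigma1 ncycles_set0.
rewrite (negbTE Sn0) face1 !ncycles_restr (ncycles_setT meetS).
by congr (_ %/ _)%Z; lia.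
Qed.

End Glue.

Lemma glue_dual (H : finType) (sigma alpha : {perm H}) (S : {set H}) :
  (forall x, alpha (alpha x) = x) -> alpha_stable alpha S ->
  glue (face_perm sigma alpha) alpha (~: S) =1 glue sigma alpha S.
Proof.
move=> alphaK alphaS x; rewrite !glueE // => [|y]; last by rewrite !inE alphaS.
by rewrite /face_perm permM inE; case: (x \in S); rewrite ?alphaK.
Qed.

Lemma genusE (H : finType) (sigma alpha : {perm H}) : [set: H] != set0 ->
  genus sigma alpha = ((2 - (ncycles sigma setT)%:Z + (ncycles alpha setT)%:Z
                         - (ncycles (face_perm sigma alpha) setT)%:Z) %/ 2)%Z.
Proof.
move=> /negbTE Hn0; rewrite /genus /genus_on Hn0.
by rewrite (@ncycles_eq _ (sigma \o alpha) (face_perm sigma alpha)) // => x; rewrite permM.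
Qed.

Lemma divz2D_odd (V F a b : nat) : odd V (+) odd a -> odd F (+) odd b ->
  ((2 - V%:Z + (a + b)%:Z - F%:Z) %/ 2)%Z
     = ((1 - V%:Z + a%:Z) %/ 2)%Z + ((1 - F%:Z + b%:Z) %/ 2)%Z.
Proof.
have even_half (m n : nat) : odd m (+) odd n -> (2 %| (1 - m%:Z + n%:Z)%R)%Z.
  move=> odd_mn; apply/dvdzP; exists (n%:Z - ((m + n)./2)%:Z).
  by have := odd_double_half (m + n); rewrite oddD odd_mn -muln2; lia.
move=> odd_Va odd_Fb; rewrite -divzDl ?even_half //; congr (_ %/ _)%Z; lia.
Qed.

Local Close Scope ring_scope.

Theorem mainTheorem7 (H : finType) (sigma alpha : {perm H}) (S : {set H}) :
  is_map sigma alpha -> alpha_stable alpha S -> covered sigma alpha S ->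
  covered (face_perm sigma alpha) alpha (~: S) /\
  genus sigma alpha =
    (genus_restr sigma alpha S + genus_restr (face_perm sigma alpha) alpha (~: S))%R.
Proof.
move=> [alphaK alpha_fpf _] alphaS covS.
have alphaSC : alpha_stable alpha (~: S) by move=> x; rewrite !inE alphaS.
have glue1 : ncycles (glue sigma alpha S) setT = 1 by apply/coveredE.
have dual1 : ncycles (glue (face_perm sigma alpha) alpha (~: S)) setT = 1.
  by rewrite (ncycles_eq _ (glue_dual sigma alphaK alphaS)).
have covSC : covered (face_perm sigma alpha) alpha (~: S) by apply/coveredE.
split=> //.
have Hn0 : [set: H] != set0.
  by apply/negP => /eqP T0; move: glue1; rewrite T0 ncycles_set0.
have := odd_ncycles_glue sigma alphaS alphaK alpha_fpf.
rewrite glue1 => /esym odd_S.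
have := odd_ncycles_glue (face_perm sigma alpha) alphaSC alphaK alpha_fpf.
rewrite dual1 => /esym odd_SC.
by rewrite genusE // !genus_restr_covered // (ncycles_split alphaS) divz2D_odd.
Qed.
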